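(* Let $n\ge 3$ and let $BP_n$ be the $n$-gonal bipyramid. If $n$ is odd, $BP_n$ is $z$-knotted. If $n=2k$ with $k$ odd, $BP_n$ has exactly two zigzags up to reversal. If $n=2k$ with $k$ even, $BP_n$ has exactly four zigzags up to reversal.
   Context: The $n$-gonal bipyramid $BP_n$ ($n\ge3$) is the triangulation of the sphere with vertices $1,\dots,n,a,b$, edges $i(i+1)$ (indices mod $n$, the base), $ai$ and $bi$ for all $i$, and faces $\{a,i,i+1\}$, $\{b,i,i+1\}$. A zigzag in a triangulation is a sequence of edges $(e_i)$ such that $e_i,e_{i+1}$ are distinct edges of a common face, the face containing $e_i,e_{i+1}$ differs from the face containing $e_{i+1},e_{i+2}$, and $e_i,e_{i+2}$ have no common vertex; it is regarded as a cyclic sequence, and its reversal $Z^{-1}$ is also a zigzag with $Z\ne Z^{-1}$. A triangulation is $z$-knotted if it has exactly two zigzags $Z$ and $Z^{-1}$. *)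

From HB Require Import structures.
From mathcomp Require Import all_boot all_order all_algebra.
Set Implicit Arguments. Unset Strict Implicit. Unset Printing Implicit Defensive.
Import GRing.Theory Num.Theory.

(* A triangulation is given by its set of faces (triangles = 3-element vertex sets).
   Edges are 2-element vertex sets contained in some face. *)
Section Zigzags.
Variable V : finType.
Variable faces : {set {set V}}.

Definition is_edge (e : {set V}) : Prop :=
  #|e| = 2 /\ exists2 F, F \in faces & e \subset F.

(* A zigzag: a bi-infinite sequence of edges (indexed by int); cyclic sequences
   are the periodic ones, and (by finiteness and determinism) every such sequence
   is periodic. Zigzags are identified up to shift of the index. *)
Definition is_zigzag (Z : int -> {set V}) : Prop :=
  forall i : int,
    [/\ is_edge (Z i),
        Z i <> Z (i + 1)%R /\
          (exists2 F, F \in faces & (Z i \subset F) && (Z (i + 1)%R \subset F)),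
        (forall F F', F \in faces -> F' \in faces ->
            Z i \subset F -> Z (i + 1)%R \subset F ->
            Z (i + 1)%R \subset F' -> Z (i + 2)%R \subset F' -> F <> F')
      & [disjoint Z i & Z (i + 2)%R]].

Definition zrev (Z : int -> {set V}) : int -> {set V} := fun i => Z (- i)%R.

Definition zeq (Z1 Z2 : int -> {set V}) : Prop :=
  exists s : int, forall i : int, Z1 i = Z2 (i + s)%R.

Definition z_knotted : Prop :=
  exists Z, [/\ is_zigzag Z, ~ zeq Z (zrev Z) &
     forall Z', is_zigzag Z' -> zeq Z' Z \/ zeq Z' (zrev Z)].

Definition num_zigzags_up_to_rev (m : nat) : Prop :=
  exists Zs : 'I_m -> (int -> {set V}),
    [/\ forall j, is_zigzag (Zs j),
        forall j1 j2, j1 <> j2 -> ~ zeq (Zs j1) (Zs j2) /\ ~ zeq (Zs j1) (zrev (Zs j2))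
      & forall Z, is_zigzag Z -> exists j, zeq Z (Zs j) \/ zeq Z (zrev (Zs j))].

End Zigzags.

(* The n-gonal bipyramid: vertices inl i (i : 'I_n, base) and inr b (b : bool; the
   two apexes a = inr true, b = inr false). Faces {apex, i, i+1 mod n}. *)
Definition BP_vertex (n : nat) : finType := ('I_n + bool)%type.

Definition BP_faces (n : nat) : {set {set BP_vertex n}} :=
  [set [set (inr x : BP_vertex n); inl i; inl (ordS i)] | x : bool, i : 'I_n].

From mathcomp Require Import all_boot all_order all_algebra.
From mathcomp Require Import zify ring.
Set Implicit Arguments. Unset Strict Implicit. Unset Printing Implicit Defensive.
Import GRing.Theory Num.Theory.

(* In a triangulation every edge lies in exactly two faces, so a zigzag is
   determined by any two consecutive edges. In BP_n a zigzag cannot pass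
   three apex edges in a row, and from a base edge on it is forced into the
   pattern  a_x(c), [c,c+1], a_~x(c+1), a_~x(c+2), [c+2,c+3], a_x(c+3), ...
   which advances by two base vertices and switches apex every three steps.
   Hence, up to shift and reversal, every zigzag is a standard one Z(c,x), and
   Z(c,x), Z(c',x') coincide up to shift iff c' = c + 2t (mod n) and x' is x
   flipped t times; no Z(c,x) is a reversed Z(c',x'), since the standard
   zigzags run through their base edges in increasing order. Counting classes:
   for n odd all pairs (c,x) are equivalent; for n = 2k the parity of c is an
   invariant, and so is x when k is even, because t is then a multiple of k. *)

Local Open Scope ring_scope.

Lemma int_ind_succ (P : int -> Prop) :
  P 0 -> (forall i, P i <-> P (i + 1)) -> forall i, P i.
Proof.
move=> P0 step.
have PN (k : nat) : P k%:Z /\ P (- k%:Z).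
  elim: k => [|k [IHp IHn]]; first by rewrite oppr0.
  rewrite -addn1 PoszD; split; first exact: (step _).1.
  by apply/(step _).2; rewrite opprD subrK.
case=> k; first by case: (PN k).
by rewrite NegzE; case: (PN k.+1).
Qed.

Section Zigzags.
Variables (V : finType) (faces : {set {set V}}).
Hypothesis card_face : forall F, F \in faces -> (#|F| <= 3)%N.

(* For faces of size at most 3 the condition that consecutive faces differ
   follows from the disjointness of [Z i] and [Z (i + 2)]. *)
Lemma zigzag_of_local (Z : int -> {set V}) :
  (forall i, [/\ #|Z i| = 2%N, Z i <> Z (i + 1),
     exists2 F, F \in faces & (Z i \subset F) && (Z (i + 1) \subset F)
     & [disjoint Z i & Z (i + 2)]]) -> is_zigzag faces Z.
Proof.
move=> HZ i; have [c2 ne [F FF sF] dj] := HZ i.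
split => //; first by split => //; case/andP: sF => s _; exists F.
  by split => //; exists F.
move=> G G' GF _ s0 _ _ s2 eGG'; subst G'.
have [c2' _ _ _] := HZ (i + 2).
have := subset_leq_card (_ : Z i :|: Z (i + 2) \subset G).
rewrite cardsU (disjoint_setI0 dj) cards0 c2 c2' subUset s0 s2 => /(_ isT).
by have := card_face GF; lia.
Qed.

Lemma zigzag_shift Z s : is_zigzag faces Z -> is_zigzag faces (fun i => Z (i + s)).
Proof.
move=> HZ i.
have -> : i + 1 + s = i + s + 1 by ring.
have -> : i + 2 + s = i + s + 2 by ring.
exact: HZ.
Qed.

Lemma zigzag_rev Z : is_zigzag faces Z -> is_zigzag faces (zrev Z).
Proof.
move=> HZ; apply: zigzag_of_local => i; rewrite /zrev.
have [[c2 _] _ _ _] := HZ (- i).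
have [_ [ne [F FF /andP[s0 s1]]] _ _] := HZ (- (i + 1)).
have [_ _ _ dj] := HZ (- (i + 2)).
have E1 : - (i + 1) + 1 = - i by ring.
have E2 : - (i + 2) + 2 = - i by ring.
rewrite E1 in ne s1; rewrite E2 in dj.
split => //; first by move/esym.
  by exists F; rewrite ?s0 ?s1.
by rewrite disjoint_sym.
Qed.

Lemma zeq_trans (Z1 Z2 Z3 : int -> {set V}) : zeq Z1 Z2 -> zeq Z2 Z3 -> zeq Z1 Z3.
Proof. by move=> [s H] [t K]; exists (s + t) => i; rewrite H K addrA. Qed.

Lemma zeq_rev (Z1 Z2 : int -> {set V}) : zeq Z1 Z2 -> zeq (zrev Z1) (zrev Z2).
Proof. by move=> [s H]; exists (- s) => i; rewrite /zrev H opprD opprK. Qed.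

Lemma zeq_up_to_rev_trans (Z Z1 Z2 : int -> {set V}) : zeq Z1 Z2 ->
  zeq Z Z1 \/ zeq Z (zrev Z1) -> zeq Z Z2 \/ zeq Z (zrev Z2).
Proof.
move=> h [h'|h']; first by left; apply: zeq_trans h' h.
by right; apply: zeq_trans h' (zeq_rev h).
Qed.

Hypothesis edge_in_at_most_two_faces : forall (e F G G' : {set V}), #|e| = 2%N ->
  F \in faces -> G \in faces -> G' \in faces ->
  e \subset F -> e \subset G -> e \subset G' -> F <> G -> F <> G' -> G = G'.

(* The common vertex [u] of [e0] and [e1] is excluded from [e2] by
   disjointness, so [e2] is the opposite edge [G :\ u] of the face [G]. *)
Lemma zigzag_step_uniq (e0 e1 e2 e2' F G G' : {set V}) :
  #|e0| = 2%N -> #|e1| = 2%N -> #|e2| = 2%N -> #|e2'| = 2%N ->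
  F \in faces -> G \in faces -> G' \in faces ->
  e0 \subset F -> e1 \subset F -> e1 \subset G -> e2 \subset G ->
  e1 \subset G' -> e2' \subset G' -> F <> G -> F <> G' ->
  [disjoint e0 & e2] -> [disjoint e0 & e2'] -> e2 = e2'.
Proof.
move=> c0 c1 c2 c2' FF GF G'F s0F s1F s1G s2G s1G' s2G' nFG nFG' d2 d2'.
have eG := edge_in_at_most_two_faces c1 FF GF G'F s1F s1G s1G' nFG nFG'; subst G'.
have : (#|e0 :|: e1| <= #|F|)%N by apply: subset_leq_card; rewrite subUset s0F s1F.
rewrite cardsU c0 c1 => hc.
have /card_gt0P [u] : (0 < #|e0 :&: e1|)%N by have := card_face FF; lia.
rewrite inE => /andP[u0 u1].
have sub_opp (e : {set V}) : e \subset G -> [disjoint e0 & e] -> e \subset G :\ u.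
  move=> sG dj; apply/subsetP => y ye; rewrite !inE (subsetP sG) // andbT.
  by apply: contraTneq ye => ->; rewrite (disjointFr dj u0).
have cG : (#|G :\ u| <= 2)%N.
  by have := card_face GF; rewrite (cardsD1 u G) (subsetP s1G).
have opp (e : {set V}) : #|e| = 2%N -> e \subset G -> [disjoint e0 & e] -> e = G :\ u.
  by move=> ce sG dj; apply/eqP; rewrite eqEcard sub_opp // ce.
by rewrite (opp e2) // (opp e2').
Qed.

Lemma zigzag_eq_succ2 Z W i : is_zigzag faces Z -> is_zigzag faces W ->
  Z i = W i -> Z (i + 1) = W (i + 1) -> Z (i + 2) = W (i + 2).
Proof.
move=> HZ HW e0 e1.
have [[c0 _] [_ [F FF /andP[s0F s1F]]] nf dj] := HZ i.
have [[c1 _] [_ [G GF /andP[s1G s2G]]] _ _] := HZ (i + 1).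
have [_ [_ [G' G'F /andP[s1G' s2G']]] _ _] := HW (i + 1).
have [[c2 _] _ _ _] := HZ (i + 2).
have [[c2' _] _ _ _] := HW (i + 2).
have [_ _ nf' dj'] := HW i.
have E : i + 1 + 1 = i + 2 by ring.
rewrite E in s2G s2G'; rewrite -e1 in s1G'; rewrite -e0 -e1 in nf' dj'.
apply: (zigzag_step_uniq c0 c1 c2 c2' FF GF G'F s0F s1F s1G s2G s1G' s2G') => //.
  exact: nf.
exact: nf'.
Qed.

Lemma zigzag_eq_pred2 Z W i : is_zigzag faces Z -> is_zigzag faces W ->
  Z (i + 1) = W (i + 1) -> Z (i + 2) = W (i + 2) -> Z i = W i.
Proof.
move=> HZ HW e1 e2.
have := zigzag_eq_succ2 (i := - (i + 2)) (zigzag_rev HZ) (zigzag_rev HW).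
have E1 : - (- (i + 2) + 1) = i + 1 by ring.
have E2 : - (- (i + 2) + 2) = i by ring.
by rewrite /zrev opprK E1 E2; apply.
Qed.

Lemma zigzag_eq_from2 Z W : is_zigzag faces Z -> is_zigzag faces W ->
  Z 0 = W 0 -> Z 1 = W 1 -> forall i, Z i = W i.
Proof.
move=> HZ HW Z0 Z1 i.
suff [] : Z i = W i /\ Z (i + 1) = W (i + 1) by [].
apply: (int_ind_succ (P := fun i => Z i = W i /\ Z (i + 1) = W (i + 1))) => {i}.
  by rewrite add0r.
move=> i; have -> : i + 1 + 1 = i + 2 by ring.
split=> [[e0 e1]|[e1 e2]]; split => //.
  exact: zigzag_eq_succ2.
exact: zigzag_eq_pred2.
Qed.

End Zigzags.

Lemma subset_set3_card2 (T : finType) (p q r : T) (e : {set T}) :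
  p <> q -> p <> r -> q <> r -> e \subset [set p; q; r] -> #|e| = 2%N ->
  [\/ e = [set p; q], e = [set p; r] | e = [set q; r]].
Proof.
move=> pq pr qr /subsetP s c2.
have sub2 a b : a <> b -> e \subset [set a; b] -> e = [set a; b].
  by move=> ab sab; apply/eqP; rewrite eqEcard sab c2 cards2; case: eqP.
case pe: (p \in e); case qe: (q \in e).
- apply: Or31; apply/esym/eqP; have /negPf pq' : p != q by apply/eqP.
  by rewrite eqEcard c2 cards2 pq' andbT; apply/subsetP => y /set2P[]->.
all: [> apply: Or32 | apply: Or33 | apply: Or33]; apply: sub2 => //.
all: apply/subsetP => y ye; have := s y ye; rewrite !inE.
all: by case/orP => [/orP[]|] /eqP yy; subst y; rewrite ?eqxx ?orbT //; rewrite ?ye in pe qe.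
Qed.

Section Bipyramid.
Variable n : nat.
Hypothesis n_ge3 : (3 <= n)%N.

Lemma ordz_subproof (z : int) : (`|(z %% n%:Z)%Z|%N < n)%N.
Proof.
have h1 : 0 <= (z %% n%:Z)%Z by apply: modz_ge0; apply/eqP; lia.
have h2 : (z %% n%:Z)%Z < n%:Z by apply: ltz_pmod; lia.
lia.
Qed.

Definition ordz (z : int) : 'I_n := Ordinal (ordz_subproof z).

Lemma ordz_val (z : int) : (ordz z)%:Z = (z %% n%:Z)%Z.
Proof. by rewrite /= abszE ger0_norm //; apply: modz_ge0; apply/eqP; lia. Qed.

Lemma ordz_eqP a b : ordz a = ordz b <-> (n%:Z %| a - b)%Z.
Proof.
rewrite -eqz_mod_dvd -!ordz_val; split => [-> // | /eqP e].
by apply: val_inj; apply/eqP; rewrite -eqz_nat e.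
Qed.

Lemma ordz_neq a b : 0 < a - b < 3 \/ 0 < b - a < 3 -> ordz a <> ordz b.
Proof.
move=> H /ordz_eqP /dvdzP [q e].
have [hq|[hq|hq]] : q = 0 \/ 1 <= q \/ q <= -1 by lia.
- by move: e; rewrite hq mul0r; lia.
- have : n%:Z <= q * n%:Z by rewrite -[X in X <= _]mul1r ler_wpM2r.
  lia.
- have : q * n%:Z <= - n%:Z by rewrite -mulN1r ler_wpM2r.
  lia.
Qed.

Lemma ordz_neq_succ z : ordz z <> ordz (z + 1).
Proof. by apply: ordz_neq; lia. Qed.

Lemma ordzD a b d : ordz a = ordz b -> ordz (a + d) = ordz (b + d).
Proof. by move/ordz_eqP => h; apply/ordz_eqP; rewrite opprD addrACA subrr addr0. Qed.

Lemma ordz_nat (i : 'I_n) : ordz i%:Z = i.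
Proof.
apply: val_inj; apply/eqP; rewrite -eqz_nat ordz_val modz_small //.
by have := ltn_ord i; lia.
Qed.

Lemma ordS_ordz z : ordS (ordz z) = ordz (z + 1).
Proof.
apply: val_inj; apply/eqP; rewrite -eqz_nat.
by rewrite /= -modz_nat -addn1 PoszD ordz_val modzDml -ordz_val.
Qed.

Local Notation vertex := (BP_vertex n).

Definition apex_edge (x : bool) (z : int) : {set vertex} := [set inr x; inl (ordz z)].
Definition base_edge (z : int) : {set vertex} := [set inl (ordz z); inl (ordz (z + 1))].
Definition bp_face (x : bool) (z : int) : {set vertex} :=
  [set inr x; inl (ordz z); inl (ordz (z + 1))].

Lemma BP_facesP F : F \in BP_faces n <-> exists x z, F = bp_face x z.
Proof.
split => [/imset2P [x i _ _ ->] | [x [z ->]]].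
  by exists x, i%:Z; rewrite /bp_face ordz_nat -ordS_ordz ordz_nat.
by apply/imset2P; exists x (ordz z) => //; rewrite /bp_face ordS_ordz.
Qed.

Lemma bp_face_in x z : bp_face x z \in BP_faces n.
Proof. by apply/BP_facesP; exists x, z. Qed.

Lemma card_bp_face F : F \in BP_faces n -> (#|F| <= 3)%N.
Proof.
case/BP_facesP => x [z ->]; apply: leq_trans (leq_card_setU _ _) _.
by rewrite cards1 cards2; case: eqP.
Qed.

Lemma in_apex_edge_l y x z : (inl y \in apex_edge x z) = (y == ordz z).
Proof. by rewrite !inE. Qed.
Lemma in_apex_edge_r y x z : (inr y \in apex_edge x z) = (y == x).
Proof. by rewrite !inE orbF. Qed.
Lemma in_base_edge_l y z : (inl y \in base_edge z) = (y == ordz z) || (y == ordz (z + 1)).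
Proof. by rewrite !inE. Qed.
Lemma in_base_edge_r y z : (inr y \in base_edge z) = false.
Proof. by rewrite !inE. Qed.
Lemma in_bp_face_l y x z : (inl y \in bp_face x z) = (y == ordz z) || (y == ordz (z + 1)).
Proof. by rewrite !inE. Qed.
Lemma in_bp_face_r y x z : (inr y \in bp_face x z) = (y == x).
Proof. by rewrite !inE !orbF. Qed.

Lemma inl_ordz_neq a b : 0 < a - b < 3 \/ 0 < b - a < 3 ->
  (inl (ordz a) : vertex) != inl (ordz b).
Proof. by move=> h; rewrite (inj_eq inl_inj); apply/eqP/ordz_neq. Qed.

Lemma card_apex_edge x z : #|apex_edge x z| = 2%N.
Proof. by rewrite cards2. Qed.

Lemma card_base_edge z : #|base_edge z| = 2%N.
Proof. by rewrite cards2 inl_ordz_neq //; lia. Qed.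

Lemma apex_edge_neq_base x z w : apex_edge x z <> base_edge w.
Proof. by move=> h; have := in_apex_edge_r x x z; rewrite h in_base_edge_r eqxx. Qed.

Lemma apex_edge_inj x z x' z' : apex_edge x z = apex_edge x' z' -> x = x' /\ ordz z = ordz z'.
Proof.
move=> h; split; apply/eqP.
  by have := in_apex_edge_r x x z; rewrite h in_apex_edge_r eqxx.
by have := in_apex_edge_l (ordz z) x z; rewrite h in_apex_edge_l eqxx.
Qed.

Lemma apex_edge_congr x z z' : ordz z = ordz z' -> apex_edge x z = apex_edge x z'.
Proof. by rewrite /apex_edge => ->. Qed.
Lemma base_edge_congr z z' : ordz z = ordz z' -> base_edge z = base_edge z'.
Proof. by rewrite /base_edge => e; rewrite e (ordzD 1 e). Qed.
Lemma bp_face_congr x z z' : ordz z = ordz z' -> bp_face x z = bp_face x z'.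
Proof. by rewrite /bp_face => e; rewrite e (ordzD 1 e). Qed.

Lemma bp_edge_cases e : is_edge (BP_faces n) e ->
  (exists x z, e = apex_edge x z) \/ (exists z, e = base_edge z).
Proof.
case=> c2 [F /BP_facesP [x [z ->]] sub].
have [] // := subset_set3_card2 _ _ _ sub c2.
- by apply/eqP; rewrite inl_ordz_neq //; lia.
- by move=> ->; left; exists x, z.
- by move=> ->; left; exists x, (z + 1).
- by move=> ->; right; exists z.
Qed.

Lemma apex_edge_sub x z y w : apex_edge x z \subset bp_face y w ->
  x = y /\ (ordz z = ordz w \/ ordz z = ordz (w + 1)).
Proof.
move/subsetP => s.
have := s (inr x); rewrite in_apex_edge_r eqxx in_bp_face_r => /(_ isT) /eqP ->.
have := s (inl (ordz z)); rewrite in_apex_edge_l eqxx in_bp_face_l.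
by case/(_ isT)/orP => /eqP ->; auto.
Qed.

Lemma base_edge_sub z y w : base_edge z \subset bp_face y w -> ordz z = ordz w.
Proof.
move/subsetP => s.
have := s (inl (ordz z)); rewrite in_base_edge_l eqxx in_bp_face_l.
case/(_ isT)/orP => /eqP // e1.
have := s (inl (ordz (z + 1))); rewrite in_base_edge_l eqxx orbT in_bp_face_l.
case/(_ isT)/orP => /eqP e2.
- have e3 := ordzD 1 e1; rewrite e2 in e3.
  by case: (ordz_neq _ e3); lia.
- by rewrite -e2 in e1; case: (ordz_neq_succ e1).
Qed.

Lemma base_edge_inj z w : base_edge z = base_edge w -> ordz z = ordz w.
Proof.
move=> h; apply: (@base_edge_sub z true w); rewrite h.
by apply/subsetP => v /set2P[]->; rewrite in_bp_face_l eqxx ?orbT.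
Qed.

Lemma apex_edge_sub_face x z w : ordz z = ordz w \/ ordz z = ordz (w + 1) ->
  apex_edge x z \subset bp_face x w.
Proof.
move=> h; apply/subsetP => v /set2P[]->; first by rewrite in_bp_face_r.
by rewrite in_bp_face_l; case: h => ->; rewrite eqxx ?orbT.
Qed.

Lemma base_edge_sub_face x z : base_edge z \subset bp_face x z.
Proof. by apply/subsetP => v /set2P[]->; rewrite in_bp_face_l eqxx ?orbT. Qed.

Lemma apex_edge_faces x z H : H \in BP_faces n -> apex_edge x z \subset H ->
  H = bp_face x z \/ H = bp_face x (z - 1).
Proof.
case/BP_facesP => y [w ->] /apex_edge_sub [<- [e|e]].
  by left; apply: bp_face_congr.
right; apply: bp_face_congr; have := ordzD (-1) e.
by rewrite addrK => ->.
Qed.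

Lemma base_edge_faces z H : H \in BP_faces n -> base_edge z \subset H ->
  H = bp_face true z \/ H = bp_face false z.
Proof.
case/BP_facesP => y [w ->] /base_edge_sub e; rewrite -(bp_face_congr y e).
by case: y; auto.
Qed.

Lemma bp_edge_in_at_most_two_faces (e F G G' : {set vertex}) : #|e| = 2%N ->
  F \in BP_faces n -> G \in BP_faces n -> G' \in BP_faces n ->
  e \subset F -> e \subset G -> e \subset G' -> F <> G -> F <> G' -> G = G'.
Proof.
move=> c2 FF GF G'F sF sG sG'.
have two (A B : {set vertex}) : (forall H, H \in BP_faces n -> e \subset H -> H = A \/ H = B) ->
    F <> G -> F <> G' -> G = G'.
  move=> AB; case: (AB F) => // ->; case: (AB G) => // ->; by case: (AB G') => // ->.
have : is_edge (BP_faces n) e by split => //; exists F.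
case/bp_edge_cases => [[x [z ee]]|[z ee]]; apply: two => H; rewrite ee.
  exact: apex_edge_faces.
exact: base_edge_faces.
Qed.

Lemma bp_zigzag_eq_from2 Z W : is_zigzag (BP_faces n) Z -> is_zigzag (BP_faces n) W ->
  Z 0 = W 0 -> Z 1 = W 1 -> forall i, Z i = W i.
Proof. exact: (zigzag_eq_from2 card_bp_face bp_edge_in_at_most_two_faces). Qed.

Definition alt (x : bool) (m : int) : bool := if (m %% 2)%Z == 0 then x else ~~ x.

Lemma alt_even x m : (m %% 2)%Z = 0 -> alt x m = x.
Proof. by rewrite /alt => ->. Qed.
Lemma alt_odd x m : (m %% 2)%Z = 1 -> alt x m = ~~ x.
Proof. by rewrite /alt => ->. Qed.

Lemma alt_negb x m : alt (~~ x) m = ~~ alt x m.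
Proof. by rewrite /alt; case: ifP. Qed.

Lemma altD x m t : alt x (m + t) = alt (alt x t) m.
Proof.
have [h|h] : (t %% 2)%Z = 0 \/ (t %% 2)%Z = 1 by lia.
all: have [h'|h'] : (m %% 2)%Z = 0 \/ (m %% 2)%Z = 1 by lia.
- by rewrite !alt_even //; lia.
- by rewrite (alt_even x h) !alt_odd //; lia.
- by rewrite (alt_odd x h) (alt_even _ h') alt_odd //; lia.
- by rewrite (alt_odd x h) (alt_odd _ h') negbK alt_even //; lia.
Qed.

Lemma alt_succ x m : alt x (m + 1) = ~~ alt x m.
Proof. by rewrite altD (alt_odd x (_ : (1 %% 2)%Z = 1)) // alt_negb. Qed.

Definition std_zigzag (c : int) (x : bool) (i : int) : {set vertex} :=
  let m := (i %/ 3)%Z in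
  if (i %% 3)%Z == 0 then apex_edge (alt x m) (c + 2 * m)
  else if (i %% 3)%Z == 1 then base_edge (c + 2 * m)
  else apex_edge (~~ alt x m) (c + 2 * m + 1).

Lemma std_zigzag0 c x m : std_zigzag c x (3 * m) = apex_edge (alt x m) (c + 2 * m).
Proof.
rewrite /std_zigzag; have -> : ((3 * m) %% 3)%Z = 0 by lia.
by have -> : ((3 * m) %/ 3)%Z = m by lia.
Qed.
Lemma std_zigzag1 c x m : std_zigzag c x (3 * m + 1) = base_edge (c + 2 * m).
Proof.
rewrite /std_zigzag; have -> : ((3 * m + 1) %% 3)%Z = 1 by lia.
by have -> : ((3 * m + 1) %/ 3)%Z = m by lia.
Qed.
Lemma std_zigzag2 c x m :
  std_zigzag c x (3 * m + 2) = apex_edge (~~ alt x m) (c + 2 * m + 1).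
Proof.
rewrite /std_zigzag; have -> : ((3 * m + 2) %% 3)%Z = 2 by lia.
by have -> : ((3 * m + 2) %/ 3)%Z = m by lia.
Qed.
Lemma std_zigzag3 c x m :
  std_zigzag c x (3 * m + 3) = apex_edge (~~ alt x m) (c + 2 * m + 2).
Proof.
have -> : 3 * m + 3 = 3 * (m + 1) by ring.
by rewrite std_zigzag0 alt_succ mulrDr addrA.
Qed.
Lemma std_zigzag4 c x m : std_zigzag c x (3 * m + 4) = base_edge (c + 2 * m + 2).
Proof.
have -> : 3 * m + 4 = 3 * (m + 1) + 1 by ring.
by rewrite std_zigzag1 mulrDr addrA.
Qed.

Lemma divz3_cases (i : int) : exists m, [\/ i = 3 * m, i = 3 * m + 1 | i = 3 * m + 2].
Proof.
exists (i %/ 3)%Z.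
have [h|[h|h]] : (i %% 3)%Z = 0 \/ (i %% 3)%Z = 1 \/ (i %% 3)%Z = 2 by lia.
- by apply: Or31; lia.
- by apply: Or32; lia.
- by apply: Or33; lia.
Qed.

Lemma disjoint_set2 (T : finType) (p q r s : T) : p != r -> p != s -> q != r -> q != s ->
  [disjoint [set p; q] & [set r; s]].
Proof.
move=> pr ps qr qs; rewrite disjoint_subset; apply/subsetP => y.
by rewrite !inE => /orP[]/eqP->; rewrite negb_or ?pr ?ps ?qr ?qs.
Qed.

Lemma std_zigzag_is_zigzag c x : is_zigzag (BP_faces n) (std_zigzag c x).
Proof.
apply: (zigzag_of_local card_bp_face) => i.
have [m [] ->] := divz3_cases i.
- rewrite std_zigzag0 std_zigzag1 std_zigzag2.
  split; [exact: card_apex_edge | exact: apex_edge_neq_base | |].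
    exists (bp_face (alt x m) (c + 2 * m)); first exact: bp_face_in.
    by rewrite apex_edge_sub_face ?base_edge_sub_face //; left.
  apply: disjoint_set2 => //; first by case: (alt x m).
  by apply: inl_ordz_neq; lia.
- have -> : 3 * m + 1 + 1 = 3 * m + 2 by ring.
  have -> : 3 * m + 1 + 2 = 3 * m + 3 by ring.
  rewrite std_zigzag1 std_zigzag2 std_zigzag3.
  split; [exact: card_base_edge | by move/esym/apex_edge_neq_base | |].
    exists (bp_face (~~ alt x m) (c + 2 * m)); first exact: bp_face_in.
    by rewrite apex_edge_sub_face ?base_edge_sub_face //; right.
  by apply: disjoint_set2 => //; apply: inl_ordz_neq; lia.
- have -> : 3 * m + 2 + 1 = 3 * m + 3 by ring.
  have -> : 3 * m + 2 + 2 = 3 * m + 4 by ring.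
  rewrite std_zigzag2 std_zigzag3 std_zigzag4.
  split; [exact: card_apex_edge | | |].
  + by case/apex_edge_inj => _; apply: ordz_neq; lia.
  + exists (bp_face (~~ alt x m) (c + 2 * m + 1)); first exact: bp_face_in.
    by rewrite !apex_edge_sub_face //; [right | left]; rewrite -?addrA.
  + by apply: disjoint_set2 => //; apply: inl_ordz_neq; lia.
Qed.

Lemma std_zigzag_at0 c x : std_zigzag c x 0 = apex_edge x c.
Proof. by have := std_zigzag0 c x 0; rewrite !mulr0 addr0 alt_even. Qed.
Lemma std_zigzag_at1 c x : std_zigzag c x 1 = base_edge c.
Proof. by have := std_zigzag1 c x 0; rewrite !mulr0 addr0 add0r. Qed.
Lemma std_zigzag_atN1 c x : std_zigzag c x (-1) = apex_edge x (c - 1).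
Proof.
have := std_zigzag2 c x (-1); rewrite alt_odd // negbK => ->.
by congr apex_edge; ring.
Qed.
Lemma std_zigzag_atN2 c x : std_zigzag c x (-2) = base_edge (c - 2).
Proof. by have := std_zigzag1 c x (-1); rewrite mulrN1 => ->. Qed.

(* Consecutive apex edges lie in a common face, hence share their apex; so
   three in a row would violate the disjointness of [Z 0] and [Z 2]. *)
Lemma zigzag_has_base_edge Z : is_zigzag (BP_faces n) Z -> exists j w, Z j = base_edge w.
Proof.
move=> HZ; have edgeZ i : is_edge (BP_faces n) (Z i) by case: (HZ i).
case: (bp_edge_cases (edgeZ 0)) => [[x0 [z0 e0]] | [w e0]]; last by exists 0, w.
case: (bp_edge_cases (edgeZ 1)) => [[x1 [z1 e1]] | [w e1]]; last by exists 1, w.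
case: (bp_edge_cases (edgeZ 2)) => [[x2 [z2 e2]] | [w e2]]; last by exists 2, w.
have [_ [_ [F /BP_facesP [y [u ->]] /andP[s0 s1]]] _ dj] := HZ 0.
have [_ [_ [G /BP_facesP [y' [u' ->]] /andP[t1 t2]]] _ _] := HZ 1.
rewrite add0r e0 e1 in s0 s1 dj; rewrite e1 in t1; rewrite e2 in t2 dj.
have [hx0 _] := apex_edge_sub s0; have [hx1 _] := apex_edge_sub s1.
have [hx1' _] := apex_edge_sub t1; have [hx2 _] := apex_edge_sub t2.
have : inr x0 \in apex_edge x0 z0 by rewrite in_apex_edge_r.
by move/(disjointFr dj); rewrite in_apex_edge_r hx0 -hx1 hx1' -hx2 eqxx.
Qed.

(* A base edge [c, c+1] is entered from an apex edge at [c] (forward standard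
   zigzag) or at [c+1] (reversed standard zigzag). *)
Lemma zigzag_zeq_std Z : is_zigzag (BP_faces n) Z ->
  exists c x, zeq Z (std_zigzag c x) \/ zeq Z (zrev (std_zigzag c x)).
Proof.
move=> HZ; have [j [w ej]] := zigzag_has_base_edge HZ.
have Ej : j - 1 + 1 = j by ring.
have [e_edge [ne [F /BP_facesP [y [u eF]] /andP[s0 s1]]] _ _] := HZ (j - 1).
rewrite Ej ej eF in s1 ne; rewrite eF in s0.
have hw := base_edge_sub s1.
have [[x [v ev]] | [w' ev]] := bp_edge_cases e_edge; last first.
  rewrite ev in s0 ne; case: ne; apply: base_edge_congr.
  by rewrite (base_edge_sub s0) hw.
rewrite ev in s0; have [_ hv] := apex_edge_sub s0.
have eqZ W : is_zigzag (BP_faces n) W -> Z (j - 1) = W 0 -> Z j = W 1 ->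
    forall i, Z i = W (i - (j - 1)).
  move=> HW h0 h1 i.
  have := bp_zigzag_eq_from2 (zigzag_shift (j - 1) HZ) HW _ _ (i - (j - 1)).
  have -> : 1 + (j - 1) = j by ring.
  by rewrite subrK add0r; apply.
case: hv => hv.
  exists w, x; left; exists (- (j - 1)) => i; apply: (eqZ _ (std_zigzag_is_zigzag w x)).
    by rewrite ev std_zigzag_at0; apply: apex_edge_congr; rewrite hv hw.
  by rewrite ej std_zigzag_at1.
exists (w + 2), x; right; exists (1 - (j - 1)) => i.
pose S := std_zigzag (w + 2) x.
have HS : is_zigzag (BP_faces n) (fun i => zrev S (i + 1)).
  exact/zigzag_shift/(zigzag_rev card_bp_face)/std_zigzag_is_zigzag.
rewrite (eqZ _ HS) /zrev.
- by congr (std_zigzag _ _ _); ring.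
- rewrite ev add0r /S std_zigzag_atN1; apply: apex_edge_congr.
  by rewrite hv -(ordzD 1 hw) -addrA.
- have -> : - (1 + 1) = -2 :> int by [].
  by rewrite ej /S std_zigzag_atN2 addrK.
Qed.

Lemma std_zigzag_congr c c' x i : ordz c = ordz c' -> std_zigzag c x i = std_zigzag c' x i.
Proof.
move=> h; have h2 := ordzD (2 * (i %/ 3)%Z) h; rewrite /std_zigzag.
case: ifP => _; first exact: apex_edge_congr.
case: ifP => _; first exact: base_edge_congr.
exact/apex_edge_congr/ordzD.
Qed.

Lemma std_zigzag_shift c x t i :
  std_zigzag c x (i + 3 * t) = std_zigzag (c + 2 * t) (alt x t) i.
Proof.
have [m [] ->] := divz3_cases i.
- have -> : 3 * m + 3 * t = 3 * (m + t) by ring.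
  by rewrite !std_zigzag0 altD; congr apex_edge; ring.
- have -> : 3 * m + 1 + 3 * t = 3 * (m + t) + 1 by ring.
  by rewrite !std_zigzag1; congr base_edge; ring.
- have -> : 3 * m + 2 + 3 * t = 3 * (m + t) + 2 by ring.
  by rewrite !std_zigzag2 altD; congr apex_edge; ring.
Qed.

Lemma std_zigzag_zeq c x t c' x' : ordz (c + 2 * t) = ordz c' -> alt x t = x' ->
  zeq (std_zigzag c x) (std_zigzag c' x').
Proof.
move=> hc hx; exists (- (3 * t)) => i.
by rewrite -{1}(subrK (3 * t) i) std_zigzag_shift hx; apply: std_zigzag_congr.
Qed.

Lemma std_zigzag_zeq_inv c x c' x' : zeq (std_zigzag c x) (std_zigzag c' x') ->
  exists t, ordz c = ordz (c' + 2 * t) /\ x = alt x' t.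
Proof.
case=> s H; have := H 1; rewrite std_zigzag_at1.
have [m [] e] := divz3_cases (1 + s); rewrite e ?std_zigzag0 ?std_zigzag1 ?std_zigzag2.
- by move/esym/apex_edge_neq_base.
- move=> _; exists m; have := H 0; rewrite std_zigzag_at0.
  have -> : 0 + s = 3 * m by lia.
  by rewrite std_zigzag0 => /apex_edge_inj [-> ->].
- by move/esym/apex_edge_neq_base.
Qed.

(* Position 1 of [std_zigzag c x] is the base edge [c, c+1], preceded by an
   apex edge at [c]; along a reversed standard zigzag a base edge [d, d+1] is
   preceded by an apex edge at [d+1]. *)
Lemma std_zigzag_neq_rev c x c' x' : ~ zeq (std_zigzag c x) (zrev (std_zigzag c' x')).
Proof.
case=> s H; have := H 1; rewrite std_zigzag_at1 /zrev.
have [m [] e] := divz3_cases (- (1 + s)); rewrite e ?std_zigzag0 ?std_zigzag1 ?std_zigzag2.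
- by move/esym/apex_edge_neq_base.
- move/base_edge_inj => h1; have := H 0; rewrite std_zigzag_at0 /zrev.
  have -> : - (0 + s) = 3 * m + 2 by lia.
  rewrite std_zigzag2 => /apex_edge_inj [_ h2].
  by rewrite h1 in h2; apply: (ordz_neq _ h2); lia.
- by move/esym/apex_edge_neq_base.
Qed.

Lemma std_zigzag_neq_parity k c c' x x' : n = k.*2 -> ((c - c') %% 2)%Z = 1 ->
  ~ zeq (std_zigzag c x) (std_zigzag c' x').
Proof.
move=> hk hp /std_zigzag_zeq_inv [t [/ordz_eqP /dvdzP [q e] _]].
have hn2 : n%:Z = 2 * k%:Z by rewrite hk; lia.
rewrite hn2 in e.
have : c - c' = 2 * (t + q * k%:Z) by rewrite -(subrK (c' + 2 * t) c) e; ring.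
lia.
Qed.

Lemma std_zigzag_neq_apex k c x x' : n = k.*2 -> ~~ odd k -> x != x' ->
  ~ zeq (std_zigzag c x) (std_zigzag c x').
Proof.
move=> hk hke hx /std_zigzag_zeq_inv [t [/ordz_eqP /dvdzP [q e] ex]].
have hk2 : k%:Z = 2 * (k./2)%:Z.
  by have := odd_double_half k; rewrite (negbTE hke) add0n; lia.
have hn2 : n%:Z = 2 * k%:Z by rewrite hk; lia.
rewrite hn2 hk2 in e.
have et : (t %% 2)%Z = 0.
  have : c - (c + 2 * t) = - (2 * t) by ring.
  rewrite e => e'.
  have : - (2 * t) = 2 * (2 * (q * (k./2)%:Z)) by rewrite -e'; ring.
  lia.
by move: hx; rewrite ex alt_even // eqxx.
Qed.

(* For [n] odd, [c + 2t = 0 (mod n)] has solutions [t] of both parities,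
   since [t] may be replaced by [t + n]. *)
Lemma std_zigzag_zeq_n_odd : odd n -> forall c x, zeq (std_zigzag c x) (std_zigzag 0 false).
Proof.
move=> ho c x.
have hn2 : n%:Z = 2 * (n./2)%:Z + 1 by have := odd_double_half n; rewrite ho; lia.
have hno : (n%:Z %% 2)%Z = 1 by lia.
pose t0 := - (c * ((n./2)%:Z + 1)).
case hx: (alt x t0).
- apply: (@std_zigzag_zeq c x (t0 + n%:Z)).
    by apply/ordz_eqP/dvdzP; exists (2 - c); rewrite hn2 /t0; ring.
  by rewrite altD (alt_odd x hno) alt_negb hx.
- apply: (@std_zigzag_zeq c x t0) => //.
  by apply/ordz_eqP/dvdzP; exists (- c); rewrite hn2 /t0; ring.
Qed.

Lemma std_zigzag_zeq_k_odd k : n = k.*2 -> odd k -> forall c x,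
  exists2 r, (r = 0 \/ r = 1) & zeq (std_zigzag c x) (std_zigzag r false).
Proof.
move=> hk ho c x.
have hn2 : n%:Z = 2 * k%:Z by rewrite hk; lia.
have hko : (k%:Z %% 2)%Z = 1 by have := odd_double_half k; rewrite ho; lia.
exists (c %% 2)%Z; first lia.
pose t0 := - (c %/ 2)%Z.
case hx: (alt x t0).
- apply: (@std_zigzag_zeq c x (t0 + k%:Z)).
    by apply/ordz_eqP/dvdzP; exists 1; rewrite hn2 /t0; lia.
  by rewrite altD (alt_odd x hko) alt_negb hx.
- apply: (@std_zigzag_zeq c x t0) => //.
  by apply/ordz_eqP/dvdzP; exists 0; rewrite /t0; lia.
Qed.

Lemma std_zigzag_zeq_parity c x :
  exists r y, (r = 0 \/ r = 1) /\ zeq (std_zigzag c x) (std_zigzag r y).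
Proof.
exists (c %% 2)%Z, (alt x (- (c %/ 2)%Z)); split; first lia.
apply: (@std_zigzag_zeq c x (- (c %/ 2)%Z)) => //.
by apply/ordz_eqP/dvdzP; exists 0; lia.
Qed.

Lemma BP_z_knotted_odd : odd n -> z_knotted (BP_faces n).
Proof.
move=> ho; exists (std_zigzag 0 false); split.
- exact: std_zigzag_is_zigzag.
- exact: std_zigzag_neq_rev.
- move=> Z /zigzag_zeq_std [c [x h]].
  exact: zeq_up_to_rev_trans (std_zigzag_zeq_n_odd ho c x) h.
Qed.

Lemma BP_two_zigzags k : n = k.*2 -> odd k -> num_zigzags_up_to_rev (BP_faces n) 2%N.
Proof.
move=> hk ho; exists (fun j : 'I_2 => std_zigzag (Posz j) false); split.
- by move=> j; apply: std_zigzag_is_zigzag.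
- move=> j1 j2 ne; split; last exact: std_zigzag_neq_rev.
  apply: (std_zigzag_neq_parity hk).
  by case: j1 j2 ne => [[|[|?]] ?] [[|[|?]] ?] ne //=; first [lia | case: ne; apply: val_inj].
- move=> Z /zigzag_zeq_std [c [x h]].
  have [r [] -> e] := std_zigzag_zeq_k_odd hk ho c x;
    have := zeq_up_to_rev_trans e h.
  + by exists (Ordinal (isT : (0 < 2)%N)).
  + by exists (Ordinal (isT : (1 < 2)%N)).
Qed.

Lemma BP_four_zigzags k : n = k.*2 -> ~~ odd k -> num_zigzags_up_to_rev (BP_faces n) 4%N.
Proof.
move=> hk he; exists (fun j : 'I_4 => std_zigzag (Posz (odd j)) (1 < j)%N); split.
- by move=> j; apply: std_zigzag_is_zigzag.
- move=> j1 j2 ne; split; last exact: std_zigzag_neq_rev.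
  case: j1 j2 ne => [[|[|[|[|?]]]] ?] [[|[|[|[|?]]]] ?] ne //=;
  first [ by case: ne; apply: val_inj
        | by apply: (std_zigzag_neq_parity hk); lia
        | exact: std_zigzag_neq_apex hk he _ ].
- move=> Z /zigzag_zeq_std [c [x h]].
  have [r [y [[] -> e]]] := std_zigzag_zeq_parity c x;
    have := zeq_up_to_rev_trans e h; case: y {e}.
  + by exists (Ordinal (isT : (2 < 4)%N)).
  + by exists (Ordinal (isT : (0 < 4)%N)).
  + by exists (Ordinal (isT : (3 < 4)%N)).
  + by exists (Ordinal (isT : (1 < 4)%N)).
Qed.

End Bipyramid.

Local Close Scope ring_scope.

Theorem mainTheorem9 (n : nat) (hn : 3 <= n) :
  [/\ odd n -> z_knotted (BP_faces n),
      (forall k, n = k.*2 -> odd k -> num_zigzags_up_to_rev (BP_faces n) 2)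
    & (forall k, n = k.*2 -> ~~ odd k -> num_zigzags_up_to_rev (BP_faces n) 4)].
Proof.
split.
- exact: BP_z_knotted_odd.
- exact: BP_two_zigzags.
- exact: BP_four_zigzags.
Qed.
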